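(* Let $m\ge1$, $n\in\mathbb{Z}$, and let $B=(b_0,\ldots,b_{m-1})$ and $T=(t_0,\ldots,t_{m-1})$ be sequences of integers with $\sum_i b_i\le n$ and $\sum_i t_i=n-m+1$. Then for every $l\in\{1,\ldots,m\}$ there exists $i\in\{0,\ldots,m-1\}$ such that for every $l'\in\{1,\ldots,l\}$, $$\sum_{j=i}^{i+l'-1}b_j\le l'-1+\sum_{j=i}^{i+l'-1}t_j.$$
   Context: Indices of $B$ and $T$ are taken modulo $m$ (ring arrangement); $\sum_{j=i}^{i+l'-1}b_j$ is the sum of the chain of $l'$ consecutive boxes starting at $b_i$. *)

From mathcomp Require Import all_boot all_order all_algebra.
Set Implicit Arguments. Unset Strict Implicit. Unset Printing Implicit Defensive.
Import Order.TTheory GRing.Theory Num.Theory.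
Local Open Scope ring_scope.

(* Sequences B = (b_0,...,b_{m-1}) are encoded as functions nat -> int, of which
   only the values at 0..m-1 matter; ring indexing: b_j := b (j %% m). *)
Definition chain_sum (m : nat) (b : nat -> int) (i l : nat) : int :=
  \sum_(i <= j < i + l) b (j %% m)%N.

From mathcomp Require Import all_boot all_order all_algebra.
From mathcomp Require Import zify lra.
Import Order.TTheory GRing.Theory Num.Theory.
Local Open Scope ring_scope.

(* With c_j := t_j - b_j + 1, read cyclically, the claim says
   that every chain starting at i has positive c-sum.  The c-sum over one
   period is at least 1, so the prefix sums S of c satisfy S (k + m) > S k;
   starting at the last minimum of S on [0, m), every partial sum of length at
   most m stays strictly above that minimum. *)

Lemma exists_last_argmin {d : Order.disp_t} {T : orderType d} (f : nat -> T)
    {m : nat} : (0 < m)%N ->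
  exists2 i, (i < m)%N &
    (forall k, (k < m)%N -> (f i <= f k)%O) /\
    (forall k, (i < k < m)%N -> (f i < f k)%O).
Proof.
elim: m => [//|[|m] IH] _.
  by exists 0%N => //; split=> [[]|[|k]].
have [i im [imin ilast]] := IH isT.
have [le_mi|lt_im] := leP (f m.+1) (f i).
- exists m.+1 => //; split=> [k|k]; last by lia.
  rewrite ltnS leq_eqVlt => /orP[/eqP-> //|km].
  exact: le_trans le_mi (imin _ km).
- exists i; first exact: ltnW.
  split=> [k|k /andP[ik]]; rewrite ltnS leq_eqVlt => /orP[/eqP->|km].
  + exact: ltW.
  + exact: imin.
  + exact: lt_im.
  + by apply: ilast; rewrite ik.
Qed.

Section CycleLemma.

Context {R : realDomainType} {m : nat} {f : nat -> R}.
Hypothesis m_gt0 : (0 < m)%N.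
Hypothesis f_periodic : forall j, f (j + m)%N = f j.
Hypothesis period_sum_gt0 : 0 < \sum_(0 <= j < m) f j.

Let S k := \sum_(0 <= j < k) f j.

Lemma prefix_sumDperiod k : S (k + m)%N = S k + S m.
Proof.
elim: k => [|k IHk]; first by rewrite add0n /S [X in _ = X + _]big_geq ?add0r.
by rewrite addSn /S !big_nat_recr //= -/(S _) IHk f_periodic addrAC.
Qed.

Lemma chain_sum_prefix i l : \sum_(i <= j < i + l) f j = S (i + l)%N - S i.
Proof. by rewrite /S (big_cat_nat (leq0n i) (leq_addr l i)) addrC addKr. Qed.

Lemma cycle_lemma :
  exists2 i, (i < m)%N &
    forall l, (0 < l <= m)%N -> 0 < \sum_(i <= j < i + l) f j.
Proof.
have [i im [imin ilast]] := exists_last_argmin S m_gt0.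
exists i => // l /andP[l_gt0 lm]; rewrite chain_sum_prefix subr_gt0.
have [ilm|] := ltnP (i + l) m.
  by apply: ilast; rewrite ilm -{1}[i]addn0 ltn_add2l l_gt0.
move=> /subnK <-; rewrite prefix_sumDperiod.
rewrite -[S i]addr0; apply: ler_ltD => //; apply: imin; lia.
Qed.

End CycleLemma.

Theorem mainTheorem6 (m : nat) (n : int) (b t : nat -> int) :
  (1 <= m)%N ->
  \sum_(0 <= i < m) b i <= n ->
  \sum_(0 <= i < m) t i = n - m%:Z + 1 ->
  forall l : nat, (1 <= l <= m)%N ->
  exists i : nat, (i < m)%N /\
    forall l' : nat, (1 <= l' <= l)%N ->
      chain_sum m b i l' <= (l'%:Z - 1) + chain_sum m t i l'.
Proof.
move=> m_gt0 hb ht l /andP[_ lm].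
pose c j := t (j %% m)%N - b (j %% m)%N + 1.
have c_periodic j : c (j + m)%N = c j by rewrite /c modnDr.
have period_sum : \sum_(0 <= j < m) c j = \sum_(0 <= j < m) t j
    - \sum_(0 <= j < m) b j + m%:Z.
  rewrite big_nat (eq_bigr (fun j => t j - b j + 1)); last first.
    by move=> j /andP[_ jm]; rewrite /c modn_small.
  by rewrite -!big_nat !big_split /= sumrN sumr_const_nat subn0 natz.
have [|i im hi] := cycle_lemma m_gt0 c_periodic.
  by rewrite period_sum ht; clear -hb; lra.
exists i; split=> // l' /andP[l'_gt0 l'l].
have := hi l'; rewrite l'_gt0 (leq_trans l'l lm) => /(_ isT).
rewrite /chain_sum /c !big_split /= sumrN sumr_const_nat addKn natz -lezD1.
by clear; lra.
Qed.
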